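(* Let $N\ge 2$ and $d_0,\dots,d_N,p_1,\dots,p_N,q_0,\dots,q_N\ge 1$ be integers, $d=\sum_{i=0}^N d_i$, $p=\sum_{i=1}^N p_i$, $\mathcal{X}=\prod_{i=0}^N\mathcal{X}_i$ with $\mathcal{X}_i\subset\mathbb{R}^{d_i}$, and $\mathcal{Y}=\prod_{i=1}^N\mathcal{Y}_i$ with $\mathcal{Y}_i\subset\mathbb{R}^{p_i}$. Let $f:\mathcal{X}\to\mathbb{R}$, $g_0:\mathcal{X}\to\mathbb{R}^{q_0}$, $g_i:\mathcal{X}_0\times\mathcal{X}_i\to\mathbb{R}^{q_i}$, $g(\mathbf{x})=(g_0(\mathbf{x}),g_1(\mathbf{x}_0,\mathbf{x}_1),\dots,g_N(\mathbf{x}_0,\mathbf{x}_N))$. For $i\in\{1,\dots,N\}$ let $\mathbf{a}_i\in\mathbb{R}^{p_i}$, $\mathbf{B}_{i,0}\in\mathbb{R}^{p_i\times d_0}$, $\mathbf{B}_{i,i}\in\mathbb{R}^{p_i\times d_i}$, and $\mathbf{C}_{i,j}\in\mathbb{R}^{p_i\times p_j}$ for $j\ne i$, and define the linear coupling functions $h_i(\mathbf{x}_0,\mathbf{x}_i,\mathbf{y}_{-i})=\mathbf{a}_i-\mathbf{B}_{i,0}\mathbf{x}_0-\mathbf{B}_{i,i}\mathbf{x}_i+\sum_{j\ne i}\mathbf{C}_{i,j}\mathbf{y}_j$, with $h=(h_1,\dots,h_N)$. The system $\mathbf{y}=h(\mathbf{x},\mathbf{y})$ reads $\mathbf{C}\mathbf{y}=\mathbf{a}-\mathbf{B}\mathbf{x}$,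 where $\mathbf{a}=(\mathbf{a}_1;\dots;\mathbf{a}_N)$, $\mathbf{B}$ is the $p\times d$ block matrix whose block row $i$ is $(\mathbf{B}_{i,0},0,\dots,0,\mathbf{B}_{i,i},0,\dots,0)$ (with $\mathbf{B}_{i,i}$ in block column $i$, block columns indexed $0,\dots,N$), and $\mathbf{C}=\mathbf{I}_p-\mathbf{K}$ with $\mathbf{K}$ the $p\times p$ block matrix with zero diagonal blocks and off-diagonal blocks $\mathbf{C}_{i,j}$. Assume $\mathbf{C}$ is invertible. Let $\mathcal{S}=\{(\mathbf{x},\mathbf{y})\in\mathcal{X}\times\mathcal{Y}:\mathbf{y}=h(\mathbf{x},\mathbf{y})\}$, and let $L:\mathcal{X}\times\mathcal{Y}\to\mathbb{R}^d$ satisfy $L(\mathbf{x},\mathbf{y})=\mathbf{x}$ for all $(\mathbf{x},\mathbf{y})\in\mathcal{S}$, with $\tilde f=f\circ L$, $\tilde g=g\circ L$ defined on $\mathcal{X}\times\mathcal{Y}$. Consider (P): minimize $f(\mathbf{x})$ subject to $g_0(\mathbf{x})\le 0$, $g_i(\mathbf{x}_0,\mathbf{x}_i)\le0$ ($1\le i\le N$); and (MDO): minimize $\tilde f(\mathbf{x},\mathbf{y})$ over $(\mathbf{x},\mathbf{y})\in\mathcal{X}\times\mathcal{Y}$ subject to $\tilde g(\mathbf{x},\mathbf{y})\le0$ and $\mathbf{y}_i=h_i(\mathbf{x}_0,\mathbf{x}_i,\mathbf{y}_{-i})$ ($1\le i\le N$). Then (MDO) is equivalent to (P) on $\Pi_{\mathcal{X}}(\mathcal{S})=\{\mathbf{x}\in\mathcal{X}:\mathbf{C}^{-1}(\mathbf{a}-\mathbf{B}\mathbf{x})\in\mathcal{Y}\}$,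 i.e. $(\mathbf{x},\mathbf{y})$ is a solution of (MDO) iff $(\mathbf{x},\mathbf{y})\in\mathcal{S}$ and $\mathbf{x}$ is a solution of (P) over this set. Moreover, writing $\boldsymbol{\beta}=-\mathbf{C}^{-1}\mathbf{B}$ in blocks $\boldsymbol{\beta}_{i,j}\in\mathbb{R}^{p_i\times d_j}$ ($1\le i\le N$, $0\le j\le N$) and $\boldsymbol{\alpha}=\mathbf{C}^{-1}\mathbf{a}=(\boldsymbol{\alpha}_1;\dots;\boldsymbol{\alpha}_N)$, and assuming $p_i=d_i$ for $1\le i\le N$, the function $L(\mathbf{x},\mathbf{y})=\big(\mathbf{x}_0,\ \mathbf{x}_1+\mathbf{y}_1-\boldsymbol{\alpha}_1-\sum_{j=0}^N\boldsymbol{\beta}_{1,j}\mathbf{x}_j,\ \dots,\ \mathbf{x}_N+\mathbf{y}_N-\boldsymbol{\alpha}_N-\sum_{j=0}^N\boldsymbol{\beta}_{N,j}\mathbf{x}_j\big)$ satisfies $L(\mathbf{x},\mathbf{y})=\mathbf{x}$ for all $(\mathbf{x},\mathbf{y})\in\mathcal{S}$.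
   Context: ''Solution'' means a global minimizer among feasible points; inequalities are componentwise. $\mathbf{x}=(\mathbf{x}_0,\dots,\mathbf{x}_N)$ with $\mathbf{x}_i\in\mathbb{R}^{d_i}$, $\mathbf{y}=(\mathbf{y}_1,\dots,\mathbf{y}_N)$ with $\mathbf{y}_i\in\mathbb{R}^{p_i}$, $\mathbf{y}_{-i}=(\mathbf{y}_j)_{j\ne i}$. *)

From HB Require Import structures.
From mathcomp Require Import all_boot all_order all_algebra.
Set Implicit Arguments. Unset Strict Implicit. Unset Printing Implicit Defensive.
Import Order.TTheory GRing.Theory Num.Theory.
Local Open Scope ring_scope.

(* Indexing conventions:
   x = (x_0,...,x_N) is a family  x : forall j : 'I_N.+1, 'cV_(d j),
     x_0 = x ord0, and x_i (1<=i<=N) = x (lift ord0 i) for i : 'I_N;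
   y = (y_1,...,y_N) is a family  y : forall i : 'I_N, 'cV_(p i)
     (paper index i corresponds to i+1 ... i.e. 'I_N enumerates 1..N). *)

Definition nonpos {R : realFieldType} {q : nat} (v : 'cV[R]_q) : Prop :=
  forall k, v k 0 <= 0.

Definition hcoup {R : realFieldType} {N : nat} {d : 'I_N.+1 -> nat}
  {p : 'I_N -> nat}
  (a : forall i, 'cV[R]_(p i)) (B : forall i j, 'M[R]_(p i, d j))
  (Cb : forall i j, 'M[R]_(p i, p j))
  (x : forall j, 'cV[R]_(d j)) (y : forall i, 'cV[R]_(p i)) (i : 'I_N)
  : 'cV[R]_(p i) :=
  a i - B i ord0 *m x ord0 - B i (lift ord0 i) *m x (lift ord0 i)
      + \sum_(j < N | j != i) Cb i j *m y j.

Definition acol {R : realFieldType} {N : nat} {p : 'I_N -> nat}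
  (a : forall i, 'cV[R]_(p i)) : 'cV[R]_(\sum_i p i) := \mxcol_i a i.

Definition xcol {R : realFieldType} {N : nat} {d : 'I_N.+1 -> nat}
  (x : forall j, 'cV[R]_(d j)) : 'cV[R]_(\sum_j d j) := \mxcol_j x j.

(* block row i of B is (B_{i,0}, 0, ..., B_{i,i}, ..., 0) : the blocks of
   B other than (i,0) and (i,i) are required to be 0 (see hypothesis) *)
Definition Bmat {R : realFieldType} {N : nat} {d : 'I_N.+1 -> nat}
  {p : 'I_N -> nat} (B : forall i j, 'M[R]_(p i, d j))
  : 'M[R]_(\sum_i p i, \sum_j d j) := \mxblock_(i, j) B i j.

Definition Kmat {R : realFieldType} {N : nat} {p : 'I_N -> nat}
  (Cb : forall i j, 'M[R]_(p i, p j)) : 'M[R]_(\sum_i p i) :=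
  \mxblock_(i, j) (if i == j then 0 else Cb i j).

Definition Cmat {R : realFieldType} {N : nat} {p : 'I_N -> nat}
  (Cb : forall i j, 'M[R]_(p i, p j)) : 'M[R]_(\sum_i p i) :=
  1%:M - Kmat Cb.

Definition Bzero {R : realFieldType} {N : nat} {d : 'I_N.+1 -> nat}
  {p : 'I_N -> nat} (B : forall i j, 'M[R]_(p i, d j)) : Prop :=
  forall i j, j != ord0 -> j != lift ord0 i -> B i j = 0.

Definition gfeas {R : realFieldType} {N : nat} {d : 'I_N.+1 -> nat}
  {q0 : nat} {q : 'I_N -> nat}
  (g0 : (forall j, 'cV[R]_(d j)) -> 'cV[R]_q0)
  (gs : forall i, 'cV[R]_(d ord0) -> 'cV[R]_(d (lift ord0 i)) -> 'cV[R]_(q i))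
  (x : forall j, 'cV[R]_(d j)) : Prop :=
  nonpos (g0 x) /\ forall i, nonpos (gs i (x ord0) (x (lift ord0 i))).

Definition inS {R : realFieldType} {N : nat} {d : 'I_N.+1 -> nat}
  {p : 'I_N -> nat}
  (X : forall j, 'cV[R]_(d j) -> Prop) (Y : forall i, 'cV[R]_(p i) -> Prop)
  (a : forall i, 'cV[R]_(p i)) (B : forall i j, 'M[R]_(p i, d j))
  (Cb : forall i j, 'M[R]_(p i, p j))
  (x : forall j, 'cV[R]_(d j)) (y : forall i, 'cV[R]_(p i)) : Prop :=
  (forall j, X j (x j)) /\ (forall i, Y i (y i)) /\
  (forall i, y i = hcoup a B Cb x y i).

Definition PiXS {R : realFieldType} {N : nat} {d : 'I_N.+1 -> nat}
  {p : 'I_N -> nat}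
  (X : forall j, 'cV[R]_(d j) -> Prop) (Y : forall i, 'cV[R]_(p i) -> Prop)
  (a : forall i, 'cV[R]_(p i)) (B : forall i j, 'M[R]_(p i, d j))
  (Cb : forall i j, 'M[R]_(p i, p j))
  (x : forall j, 'cV[R]_(d j)) : Prop :=
  (forall j, X j (x j)) /\
  (forall i, Y i (submxcol (invmx (Cmat Cb) *m (acol a - Bmat B *m xcol x)) i)).

Definition solProbP {R : realFieldType} {N : nat} {d : 'I_N.+1 -> nat}
  {q0 : nat} {q : 'I_N -> nat}
  (D : (forall j, 'cV[R]_(d j)) -> Prop)
  (f : (forall j, 'cV[R]_(d j)) -> R)
  (g0 : (forall j, 'cV[R]_(d j)) -> 'cV[R]_q0)
  (gs : forall i, 'cV[R]_(d ord0) -> 'cV[R]_(d (lift ord0 i)) -> 'cV[R]_(q i))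
  (x : forall j, 'cV[R]_(d j)) : Prop :=
  D x /\ gfeas g0 gs x /\
  forall x', D x' -> gfeas g0 gs x' -> f x <= f x'.

Definition feasMDO {R : realFieldType} {N : nat} {d : 'I_N.+1 -> nat}
  {p : 'I_N -> nat} {q0 : nat} {q : 'I_N -> nat}
  (X : forall j, 'cV[R]_(d j) -> Prop) (Y : forall i, 'cV[R]_(p i) -> Prop)
  (a : forall i, 'cV[R]_(p i)) (B : forall i j, 'M[R]_(p i, d j))
  (Cb : forall i j, 'M[R]_(p i, p j))
  (L : (forall j, 'cV[R]_(d j)) -> (forall i, 'cV[R]_(p i)) ->
       (forall j, 'cV[R]_(d j)))
  (g0 : (forall j, 'cV[R]_(d j)) -> 'cV[R]_q0)
  (gs : forall i, 'cV[R]_(d ord0) -> 'cV[R]_(d (lift ord0 i)) -> 'cV[R]_(q i))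
  (x : forall j, 'cV[R]_(d j)) (y : forall i, 'cV[R]_(p i)) : Prop :=
  (forall j, X j (x j)) /\ (forall i, Y i (y i)) /\
  gfeas g0 gs (L x y) /\ (forall i, y i = hcoup a B Cb x y i).

Definition solMDO {R : realFieldType} {N : nat} {d : 'I_N.+1 -> nat}
  {p : 'I_N -> nat} {q0 : nat} {q : 'I_N -> nat}
  (X : forall j, 'cV[R]_(d j) -> Prop) (Y : forall i, 'cV[R]_(p i) -> Prop)
  (a : forall i, 'cV[R]_(p i)) (B : forall i j, 'M[R]_(p i, d j))
  (Cb : forall i j, 'M[R]_(p i, p j))
  (L : (forall j, 'cV[R]_(d j)) -> (forall i, 'cV[R]_(p i)) ->
       (forall j, 'cV[R]_(d j)))
  (f : (forall j, 'cV[R]_(d j)) -> R)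
  (g0 : (forall j, 'cV[R]_(d j)) -> 'cV[R]_q0)
  (gs : forall i, 'cV[R]_(d ord0) -> 'cV[R]_(d (lift ord0 i)) -> 'cV[R]_(q i))
  (x : forall j, 'cV[R]_(d j)) (y : forall i, 'cV[R]_(p i)) : Prop :=
  feasMDO X Y a B Cb L g0 gs x y /\
  forall x' y', feasMDO X Y a B Cb L g0 gs x' y' ->
    f (L x y) <= f (L x' y').

Definition betamx {R : realFieldType} {N : nat} {d : 'I_N.+1 -> nat}
  {p : 'I_N -> nat} (B : forall i j, 'M[R]_(p i, d j))
  (Cb : forall i j, 'M[R]_(p i, p j)) : 'M[R]_(\sum_i p i, \sum_j d j) :=
  - (invmx (Cmat Cb) *m Bmat B).

Definition alphamx {R : realFieldType} {N : nat} {p : 'I_N -> nat}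
  (a : forall i, 'cV[R]_(p i)) (Cb : forall i j, 'M[R]_(p i, p j))
  : 'cV[R]_(\sum_i p i) := invmx (Cmat Cb) *m acol a.

(* The specific map L of the second part (requires p_i = d_i, given by hpd):
   L(x,y)_0 = x_0,
   L(x,y)_i = x_i + y_i - alpha_i - sum_{j=0}^N beta_{i,j} x_j   (1<=i<=N),
   where y_i - ... (a vector of size p_i) is identified with a vector of
   size d_i via hpd. *)
Definition Lspec {R : realFieldType} {N : nat} {d : 'I_N.+1 -> nat}
  {p : 'I_N -> nat} (hpd : forall i, p i = d (lift ord0 i))
  (a : forall i, 'cV[R]_(p i)) (B : forall i j, 'M[R]_(p i, d j))
  (Cb : forall i j, 'M[R]_(p i, p j))
  (x : forall j, 'cV[R]_(d j)) (y : forall i, 'cV[R]_(p i))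
  : forall j, 'cV[R]_(d j) :=
  fun j =>
    match unliftP ord0 j with
    | UnliftSome i e =>
        ecast k ('cV[R]_(d k)) (esym e)
          (x (lift ord0 i)
           + castmx (hpd i, erefl 1%N)
               (y i - submxcol (alphamx a Cb) i
                - \sum_(k < N.+1) submxblock (betamx B Cb) i k *m x k))
    | UnliftNone _ => x j
    end.

(* The coupling equations [y = h(x, y)] are the block linear system
   [C y = a - B x]; as [C] is invertible, every [x] determines a unique
   coupled [y = C^-1 (a - B x) = alpha + beta x].  Hence the projection of
   [S] onto [x] is [Pi_X(S)], [L] collapses every feasible [(x, y)] of (MDO)
   to [x], and minimizing [f o L] over feasible pairs is minimizing [f] over
   [Pi_X(S)].  For the explicit [L], the correction [y_i - alpha_i - beta_i x]
   vanishes on [S]. *)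
From Pilot Require Import Defs.
From Stdlib Require Import FunctionalExtensionality.
From HB Require Import structures.
From mathcomp Require Import all_boot all_order all_algebra.
Import Order.TTheory GRing.Theory Num.Theory.
Local Open Scope ring_scope.

Section LiftedArgmin.

Context {Tx Ty : Type} {disp : Order.disp_t} {T : porderType disp}.
Context {F S : Tx -> Ty -> Prop} {D G : Tx -> Prop}.
Context {L : Tx -> Ty -> Tx} {f : Tx -> T}.

Hypothesis L_id : forall {x y}, S x y -> L x y = x.
Hypothesis D_proj : forall x, D x <-> exists y, S x y.
Hypothesis F_def : forall x y, F x y <-> S x y /\ G (L x y).

Lemma lifted_argminP x y :
  (F x y /\ forall x' y', F x' y' -> (f (L x y) <= f (L x' y'))%O) <->
  (S x y /\ (D x /\ G x /\ forall x', D x' -> G x' -> (f x <= f x')%O)).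
Proof.
split.
- case=> /F_def[Sxy]; rewrite (L_id Sxy) => Gx minxy.
  split=> //; split; first by apply/D_proj; exists y.
  split=> // x' /D_proj[y' Sxy'] Gx'.
  have := minxy x' y'; rewrite (L_id Sxy'); apply.
  by apply/F_def; rewrite (L_id Sxy').
- case=> Sxy [_ [Gx minx]]; split; first by apply/F_def; rewrite (L_id Sxy).
  move=> x' y' /F_def[Sxy']; rewrite (L_id Sxy) (L_id Sxy') => Gx'.
  by apply: minx => //; apply/D_proj; exists y'.
Qed.

End LiftedArgmin.

Definition coupled_sol {R : realFieldType} {N : nat} {d : 'I_N.+1 -> nat}
  {p : 'I_N -> nat} (a : forall i, 'cV[R]_(p i))
  (B : forall i j, 'M[R]_(p i, d j)) (Cb : forall i j, 'M[R]_(p i, p j))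
  (x : forall j, 'cV[R]_(d j)) : forall i, 'cV[R]_(p i) :=
  fun i => submxcol (invmx (Cmat Cb) *m (acol a - Bmat B *m Defs.xcol x)) i.

Section Coupling.

Context {R : realFieldType} {N : nat} {d : 'I_N.+1 -> nat} {p : 'I_N -> nat}.
Context {a : forall i, 'cV[R]_(p i)} {B : forall i j, 'M[R]_(p i, d j)}.
Context {Cb : forall i j, 'M[R]_(p i, p j)}.

Lemma sum_Kblock_mul (y : forall i, 'cV[R]_(p i)) i :
  \sum_j (if i == j then 0 else Cb i j) *m y j =
  \sum_(j < N | j != i) Cb i j *m y j.
Proof.
rewrite (bigD1 i) //= eqxx mul0mx add0r; apply: eq_bigr => j ji.
by rewrite eq_sym (negbTE ji).
Qed.

Hypothesis B_sparse : Bzero B.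

Lemma sum_Bblock_mul (x : forall j, 'cV[R]_(d j)) i :
  \sum_j B i j *m x j = B i ord0 *m x ord0 + B i (lift ord0 i) *m x (lift ord0 i).
Proof.
rewrite (bigD1 ord0) //= (bigD1 (lift ord0 i)) //= big1 ?addr0 // => j.
by case/andP=> j0 ji; rewrite B_sparse // mul0mx.
Qed.

Lemma hcoup_fixpointE x y :
  (forall i, y i = hcoup a B Cb x y i) <->
  Cmat Cb *m \mxcol_i y i = acol a - Bmat B *m Defs.xcol x.
Proof.
rewrite /Cmat mulmxBl mul1mx /Kmat /Bmat /acol /Defs.xcol !mul_mxblock_mxrow -!mxcolB.
apply: (iff_trans _ (eq_mxcolP _ _)); split=> eq_y i; move: (eq_y i).
- by rewrite sum_Kblock_mul sum_Bblock_mul /hcoup => {1}->; rewrite addrK opprD addrA.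
- rewrite sum_Kblock_mul sum_Bblock_mul /hcoup opprD addrA => <-.
  by rewrite subrK.
Qed.

Lemma coupled_solE x i :
  coupled_sol a B Cb x i =
  submxcol (alphamx a Cb) i + \sum_k submxblock (betamx B Cb) i k *m x k.
Proof.
have -> : \sum_k submxblock (betamx B Cb) i k *m x k =
          submxcol (betamx B Cb *m Defs.xcol x) i.
  by rewrite -[in RHS](submxblockK (betamx B Cb)) mul_mxblock_mxrow mxcolK.
by rewrite -submxcolD /coupled_sol /alphamx /betamx mulmxBr mulNmx mulmxA.
Qed.

Hypothesis C_unit : Cmat Cb \in unitmx.

Lemma hcoup_fixpoint_uniq x y :
  (forall i, y i = hcoup a B Cb x y i) <-> (forall i, y i = coupled_sol a B Cb x i).
Proof.
apply: iff_trans (hcoup_fixpointE x y) _; split=> [Cy i | y_sol].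
- by rewrite /coupled_sol -Cy mulKmx // mxcolK.
- have -> : \mxcol_i y i = invmx (Cmat Cb) *m (acol a - Bmat B *m Defs.xcol x).
    by apply/mxcolP => i; rewrite mxcolK.
  by rewrite mulKVmx.
Qed.

Context {X : forall j, 'cV[R]_(d j) -> Prop} {Y : forall i, 'cV[R]_(p i) -> Prop}.

Lemma inS_coupled_sol x y :
  inS X Y a B Cb x y <-> PiXS X Y a B Cb x /\ forall i, y i = coupled_sol a B Cb x i.
Proof.
split=> [[Xx [Yy /hcoup_fixpoint_uniq y_sol]] | [[Xx Yx] y_sol]].
- by split=> //; split=> // i; rewrite -[submxcol _ i]/(coupled_sol a B Cb x i) -y_sol.
- by split=> //; split; [move=> i; rewrite y_sol; apply: Yx | apply/hcoup_fixpoint_uniq].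
Qed.

Lemma PiXS_inS x : PiXS X Y a B Cb x <-> exists y, inS X Y a B Cb x y.
Proof.
split=> [PIx | [y /inS_coupled_sol[] //]].
by exists (coupled_sol a B Cb x); apply/inS_coupled_sol.
Qed.

End Coupling.

Lemma feasMDO_inS {R : realFieldType} {N : nat} {d : 'I_N.+1 -> nat}
  {p : 'I_N -> nat} {q0 : nat} {q : 'I_N -> nat}
  {X : forall j, 'cV[R]_(d j) -> Prop} {Y : forall i, 'cV[R]_(p i) -> Prop}
  {a : forall i, 'cV[R]_(p i)} {B : forall i j, 'M[R]_(p i, d j)}
  {Cb : forall i j, 'M[R]_(p i, p j)}
  {L : (forall j, 'cV[R]_(d j)) -> (forall i, 'cV[R]_(p i)) ->
       (forall j, 'cV[R]_(d j))}
  {g0 : (forall j, 'cV[R]_(d j)) -> 'cV[R]_q0}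
  {gs : forall i, 'cV[R]_(d ord0) -> 'cV[R]_(d (lift ord0 i)) -> 'cV[R]_(q i)}
  x y :
  feasMDO X Y a B Cb L g0 gs x y <-> inS X Y a B Cb x y /\ gfeas g0 gs (L x y).
Proof. by split=> [[Xx [Yy [G Sy]]] | [[Xx [Yy Sy]] G]]. Qed.

Lemma Lspec_id (R : realFieldType) (N : nat) (d : 'I_N.+1 -> nat)
  (p : 'I_N -> nat) (hpd : forall i, p i = d (lift ord0 i))
  (a : forall i, 'cV[R]_(p i)) (B : forall i j, 'M[R]_(p i, d j))
  (Cb : forall i j, 'M[R]_(p i, p j)) x y :
  (forall i, y i = coupled_sol a B Cb x i) -> Lspec hpd a B Cb x y = x.
Proof.
move=> y_sol; apply: functional_extensionality_dep => j.
rewrite /Lspec; case: unliftP => [i j_i|] //.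
rewrite -addrA -opprD y_sol coupled_solE subrr.
have -> : castmx (hpd i, erefl 1%N) (0 : 'cV[R]_(p i)) = 0.
  by apply/matrixP => u v; rewrite castmxE !mxE.
by rewrite addr0; subst j.
Qed.

Theorem proposition3 (R : realFieldType) (N : nat)
  (d : 'I_N.+1 -> nat) (p : 'I_N -> nat) (q0 : nat) (q : 'I_N -> nat)
  (X : forall j, 'cV[R]_(d j) -> Prop) (Y : forall i, 'cV[R]_(p i) -> Prop)
  (f : (forall j, 'cV[R]_(d j)) -> R)
  (g0 : (forall j, 'cV[R]_(d j)) -> 'cV[R]_q0)
  (gs : forall i, 'cV[R]_(d ord0) -> 'cV[R]_(d (lift ord0 i)) -> 'cV[R]_(q i))
  (a : forall i, 'cV[R]_(p i)) (B : forall i j, 'M[R]_(p i, d j))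
  (Cb : forall i j, 'M[R]_(p i, p j))
  (L : (forall j, 'cV[R]_(d j)) -> (forall i, 'cV[R]_(p i)) ->
       (forall j, 'cV[R]_(d j)))
  (hN : (2 <= N)%N)
  (hd : forall j, (1 <= d j)%N) (hp : forall i, (1 <= p i)%N)
  (hq0 : (1 <= q0)%N) (hq : forall i, (1 <= q i)%N)
  (hB : Bzero B)
  (hC : Cmat Cb \in unitmx)
  (hL : forall x y, inS X Y a B Cb x y -> L x y = x) :
  (forall x y,
     solMDO X Y a B Cb L f g0 gs x y <->
     (inS X Y a B Cb x y /\ solProbP (PiXS X Y a B Cb) f g0 gs x))
  /\
  (forall hpd : (forall i, p i = d (lift ord0 i)),
   forall x y, inS X Y a B Cb x y -> Lspec hpd a B Cb x y = x).
Proof.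
split=> [x y | hpd x y /(inS_coupled_sol hB hC)[_ y_sol]].
- apply: lifted_argminP => [x' y' | x' | x' y'].
  + exact: hL.
  + exact: (PiXS_inS hB hC).
  + exact: feasMDO_inS.
- exact: Lspec_id.
Qed.
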